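(* Let $Z$ be a random variable with density $f$, CDF $F$ and $\overline F = 1-F$, satisfying: (a) continuous distribution with bounded density; (b) finite expectation; (c) support unbounded in the $+\infty$ direction; (d) the hazard rate $f(z)/\overline F(z)$ is eventually monotone. Then for every $\lambda>0$, the function $z\mapsto \overline F(z)e^{\lambda z}$ is eventually monotone.
   Context: A function $\phi$ is eventually monotone if there is $z_0\ge 0$ such that $\phi$ is non-decreasing on $(z_0,\infty)$ or non-increasing on $(z_0,\infty)$. *)

From mathcomp Require Import all_boot all_order all_algebra.
From mathcomp Require Import all_classical all_reals all_analysis.
Set Implicit Arguments. Unset Strict Implicit. Unset Printing Implicit Defensive.
Import Order.TTheory GRing.Theory Num.Theory.
Local Open Scope classical_set_scope.
Local Open Scope ring_scope.

Definition eventually_monotone (R : realType) (phi : R -> R) : Prop :=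
  exists z0 : R, 0 <= z0 /\
    ((forall x y, z0 < x -> x <= y -> phi x <= phi y) \/
     (forall x y, z0 < x -> x <= y -> phi y <= phi x)).

Definition cdf (R : realType) (f : R -> R) (z : R) : R :=
  fine (\int[lebesgue_measure]_(x in `]-oo, z]) (f x)%:E)%E.

Definition survival (R : realType) (f : R -> R) (z : R) : R := 1 - cdf f z.

Definition hazard (R : realType) (f : R -> R) (z : R) : R := f z / survival f z.

(* The survival function S = 1 - F satisfies S a - S b = \int_(a,b] f. On a
   tail where the hazard rate f/S stays >= lam this gives
   S b (1 + lam (b - a)) <= S a, and where it stays <= lam it gives
   S a (1 - lam (b - a)) <= S b. Chaining n equal steps and letting n -> oo,
   using (1 + v)^n >= e^(nv) (1 - n v^2), shows that S(z) e^(lam z) is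
   non-increasing, resp. non-decreasing, on that tail. An eventually monotone
   hazard rate eventually stays on one side of lam. *)

From Pilot Require Import Defs.
From mathcomp Require Import all_boot all_order all_algebra.
From mathcomp Require Import all_classical all_reals all_analysis.
From mathcomp Require Import measurable_realfun ring lra.
Import Order.TTheory GRing.Theory Num.Theory.
Import numFieldNormedType.Exports.
Set Implicit Arguments. Unset Strict Implicit.
Local Open Scope classical_set_scope.
Local Open Scope ring_scope.

Lemma bernoulli_ineq (R : realDomainType) (x : R) n :
  -1 <= x -> 1 + n%:R * x <= (1 + x) ^+ n.
Proof.
move=> x_ge; elim: n => [|n IHn]; first by rewrite mul0r addr0 expr0.
have x1_ge0 : 0 <= 1 + x by lra.
have := ler_wpM2l x1_ge0 IHn.
rewrite exprS -natr1; have : 0 <= n%:R :> R by exact: ler0n.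
nra.
Qed.

Section expR_bounds.
Variable R : realType.

Lemma expR_1Bsqr_le1D (v : R) : -1 <= v <= 1 -> expR v * (1 - v ^+ 2) <= 1 + v.
Proof.
move=> /andP[v_ge v_le].
have : expR v * (1 - v) <= 1.
  by rewrite -ler_pdivlMl ?expR_gt0 // mulr1 -expRN expR_ge1Dx.
have := expR_gt0 v; nra.
Qed.

Lemma expRMn_1Bsqr_le_exprD1 (v : R) n : -1 <= v <= 1 ->
  expR (n%:R * v) * (1 - n%:R * v ^+ 2) <= (1 + v) ^+ n.
Proof.
move=> v_bd; have v2_bd : 0 <= v ^+ 2 <= 1 by case/andP: v_bd; nra.
have base_ge0 : 0 <= expR v * (1 - v ^+ 2).
  by apply: mulr_ge0; [exact: expR_ge0 | case/andP: v2_bd; nra].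
have base_le := expR_1Bsqr_le1D v_bd.
have powX := lerXn2r n (x := expR v * (1 - v ^+ 2)) (y := 1 + v).
rewrite !nnegrE in powX; apply: le_trans (powX base_ge0 _ base_le); last first.
  exact: le_trans base_ge0 base_le.
rewrite exprMn expRM_natl ler_wpM2l ?exprn_ge0 ?expR_ge0 //.
have := @bernoulli_ineq _ (- v ^+ 2) n; rewrite mulrN; apply; case/andP: v2_bd; lra.
Qed.
End expR_bounds.

Lemma cvg_1B_divSn (R : realType) (a : R) : 1 - a / n.+1%:R @[n --> \oo] --> (1 : R).
Proof.
rewrite -[X in _ --> X]subr0; apply: cvgB; first exact: cvg_cst.
rewrite -(mulr0 a); apply: cvgM; first exact: cvg_cst.
exact: cvg_harmonic.
Qed.

Section discrete_gronwall.
Variables (R : realType) (g : R -> R) (c x y : R).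
Hypothesis g_step : forall a b, x <= a -> a <= b -> b <= y ->
  g a * (1 + c * (b - a)) <= g b.

Lemma gronwall_iter d k : 0 <= d -> 0 <= 1 + c * d -> x + k%:R * d <= y ->
  g x * (1 + c * d) ^+ k <= g (x + k%:R * d).
Proof.
move=> d_ge0 cd_ge0; elim: k => [|k IHk] kd_le; first by rewrite mul0r addr0 expr0 mulr1.
have k_le : x + k%:R * d <= x + k.+1%:R * d by rewrite lerD2l ler_wpM2r // ler_nat.
rewrite exprSr mulrA; apply: le_trans (ler_wpM2r cd_ge0 (IHk (le_trans k_le kd_le))) _.
have x_le : x <= x + k%:R * d by rewrite lerDl mulr_ge0.
have := g_step x_le k_le kd_le.
by have -> : x + k.+1%:R * d - (x + k%:R * d) = d by rewrite -natr1; ring.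
Qed.

Hypotheses (gx_ge0 : 0 <= g x) (x_le_y : x <= y).

Lemma gronwall_discrete n : `|c * (y - x)| <= n.+1%:R ->
  g x * expR (c * (y - x)) * (1 - (c * (y - x)) ^+ 2 / n.+1%:R) <= g y.
Proof.
set C := c * (y - x) => C_le; have n_gt0 : 0 < n.+1%:R :> R by [].
set d := (y - x) / n.+1%:R.
have d_ge0 : 0 <= d by rewrite divr_ge0 // subr_ge0.
have nd : n.+1%:R * d = y - x by rewrite mulrC divfK // gt_eqF.
have ncd : n.+1%:R * (c * d) = C by rewrite mulrCA nd.
have cd_bd : -1 <= c * d <= 1.
  rewrite -ler_norml -(ler_pM2l n_gt0) mulr1.
  by rewrite -[n.+1%:R in X in X <= _]ger0_norm ?ler0n // -normrM ncd.
have := expRMn_1Bsqr_le_exprD1 n.+1 cd_bd.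
have -> : n.+1%:R * (c * d) ^+ 2 = C ^+ 2 / n.+1%:R by rewrite -ncd; field.
rewrite ncd -mulrA => /(ler_wpM2l gx_ge0)/le_trans; apply.
have xnd : x + n.+1%:R * d = y by rewrite nd addrC subrK.
have := @gronwall_iter d n.+1 d_ge0; rewrite xnd; apply=> //.
by case/andP: cd_bd; lra.
Qed.

Lemma gronwall : g x * expR (c * (y - x)) <= g y.
Proof.
set C := c * (y - x).
apply: (cvgr_to_le (F := \oo) (f := fun n => g x * expR C * (1 - C ^+ 2 / n.+1%:R))).
  rewrite -[X in _ --> X]mulr1.
  by apply: cvgM; [exact: cvg_cst | exact: cvg_1B_divSn].
near=> n; apply: gronwall_discrete; rewrite -natr1.
suff : `|C| < n%:R by lra.
by near: n; exact: nbhs_infty_gtr.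
Unshelve. all: by end_near.
Qed.
End discrete_gronwall.

Lemma gronwall_rev (R : realType) (g : R -> R) (c x y : R) :
  (forall a b, x <= a -> a <= b -> b <= y -> g b * (1 + c * (b - a)) <= g a) ->
  0 <= g y -> x <= y -> g y * expR (c * (y - x)) <= g x.
Proof.
move=> g_step gy_ge0 x_le_y.
have := @gronwall _ (fun t => g (- t)) c (- y) (- x).
rewrite !opprK addrC; apply=> //; last by rewrite lerN2.
move=> a b ya ab bx; have := g_step (- b) (- a).
by rewrite opprK (addrC (- a)) lerNr lerN2 lerNl; apply.
Qed.

Lemma integral_cst_itv_oc (R : realType) (a b c : R) : a <= b ->
  (\int[lebesgue_measure]_(x in `]a, b]) c%:E = (c * (b - a))%:E)%E.
Proof.
move=> ab; rewrite (@integral_cst _ _ _ lebesgue_measure _ (measurable_itv `]a, b]) c%:E).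
have /= := lebesgue_measure_itv `]a, b]; rewrite lte_fin => ->.
have [a_lt_b|b_le_a] := ltP a b; first by rewrite -EFinD -EFinM.
have -> : b = a by apply/le_anti; rewrite b_le_a ab.
by rewrite subrr mulr0 mule0.
Qed.

Section density.
Variables (R : realType) (f : R -> R).
Hypotheses (f_meas : measurable_fun setT f) (f_ge0 : forall x, 0 <= f x).
Hypothesis f_int1 : (\int[lebesgue_measure]_x (f x)%:E = 1)%E.

Local Notation mu := (@lebesgue_measure R).
Local Notation mass A := (fine (\int[mu]_(x in A) (f x)%:E)%E).

Let f_EFin_meas (A : set R) : measurable_fun A (fun x => (f x)%:E).
Proof. exact/measurable_EFinP/measurable_funTS. Qed.

Let f_EFin_ge0 (A : set R) : forall x, A x -> (0 <= (f x)%:E)%E.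
Proof. by move=> x _; rewrite lee_fin. Qed.

Lemma integral_density_fin (A : set R) : measurable A ->
  (\int[mu]_(x in A) (f x)%:E)%E = (mass A)%:E.
Proof.
move=> mA; rewrite fineK // ge0_fin_numE; last by apply: integral_ge0; exact: f_EFin_ge0.
apply: (le_lt_trans _ (ltry 1%R)); rewrite -f_int1.
by apply: ge0_subset_integral => //; [exact: f_EFin_meas | exact: f_EFin_ge0].
Qed.

Lemma survival_sub a b : a <= b -> survival f a - survival f b = mass `]a, b].
Proof.
move=> ab; rewrite /survival /Defs.cdf.
have -> : `]-oo, b]%classic = `]-oo, a]%classic `|` `]a, b]%classic :> set R.
  by rewrite -itv_bndbnd_setU // bnd_simp.
rewrite ge0_integral_setU //=; first last.
- apply/disj_setPS => x [/=]; rewrite !in_itv /= => x_le_a /andP[a_lt_x _].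
  by move: (lt_le_trans a_lt_x x_le_a); rewrite ltxx.
- exact: f_EFin_ge0.
- exact: f_EFin_meas.
rewrite (integral_density_fin (measurable_itv `]-oo, a]))
  (integral_density_fin (measurable_itv `]a, b])) -EFinD /=.
lra.
Qed.
Lemma mass_itv_ge a b c : a <= b -> 0 <= c ->
  (forall t, a < t -> t <= b -> c <= f t) -> c * (b - a) <= mass `]a, b].
Proof.
move=> ab c_ge0 c_le_f.
rewrite -lee_fin -integral_density_fin // -integral_cst_itv_oc //.
apply: ge0_le_integral => //; first exact: f_EFin_meas.
by move=> x /=; rewrite in_itv /= => /andP[ax xb]; rewrite lee_fin c_le_f.
Qed.

Lemma mass_itv_le a b c : a <= b ->
  (forall t, a < t -> t <= b -> f t <= c) -> mass `]a, b] <= c * (b - a).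
Proof.
move=> ab f_le_c.
rewrite -lee_fin -integral_density_fin // -integral_cst_itv_oc //.
apply: ge0_le_integral => //; [exact: f_EFin_ge0 | exact: f_EFin_meas | ].
by move=> x /=; rewrite in_itv /= => /andP[ax xb]; rewrite lee_fin f_le_c.
Qed.
Lemma survival_nonincreasing a b : a <= b -> survival f b <= survival f a.
Proof.
move=> ab; rewrite -subr_ge0 survival_sub //.
by have := mass_itv_ge ab (lexx 0); rewrite mul0r; apply=> t _ _.
Qed.

Hypothesis survival_gt0 : forall z, 0 < survival f z.

Lemma survival_step_hazard_ge lam a b : a <= b -> 0 <= lam ->
  (forall t, a < t -> t <= b -> lam <= hazard f t) ->
  survival f b * (1 + lam * (b - a)) <= survival f a.
Proof.
move=> ab lam_ge0 lam_le_h.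
suff : lam * survival f b * (b - a) <= survival f a - survival f b by nra.
rewrite survival_sub //; apply: mass_itv_ge => // [|t a_lt_t t_le_b].
  exact: mulr_ge0 lam_ge0 (ltW (survival_gt0 b)).
have := lam_le_h t a_lt_t t_le_b; rewrite /hazard ler_pdivlMr //; apply: le_trans.
by rewrite ler_wpM2l // survival_nonincreasing.
Qed.

Lemma survival_step_hazard_le lam a b : a <= b -> 0 <= lam ->
  (forall t, a < t -> t <= b -> hazard f t <= lam) ->
  survival f a * (1 - lam * (b - a)) <= survival f b.
Proof.
move=> ab lam_ge0 h_le_lam.
suff : survival f a - survival f b <= lam * survival f a * (b - a) by nra.
rewrite survival_sub //; apply: mass_itv_le => // t a_lt_t t_le_b.
have := h_le_lam t a_lt_t t_le_b; rewrite /hazard ler_pdivrMr // => /le_trans; apply.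
by rewrite ler_wpM2l // survival_nonincreasing // ltW.
Qed.

Lemma survival_expR_nonincreasing lam x y : 0 <= lam ->
  (forall t, x < t -> lam <= hazard f t) -> x <= y ->
  survival f y * expR (lam * y) <= survival f x * expR (lam * x).
Proof.
move=> lam_ge0 lam_le_h xy.
have -> : expR (lam * y) = expR (lam * (y - x)) * expR (lam * x).
  by rewrite -expRD; congr expR; ring.
rewrite mulrA ler_wpM2r ?expR_ge0 //; apply: gronwall_rev => // [a b xa ab _|].
  by apply: survival_step_hazard_ge => // t a_lt_t _; exact: lam_le_h (le_lt_trans xa a_lt_t).
exact: ltW.
Qed.

Lemma survival_expR_nondecreasing lam x y : 0 <= lam ->
  (forall t, x < t -> hazard f t <= lam) -> x <= y ->
  survival f x * expR (lam * x) <= survival f y * expR (lam * y).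
Proof.
move=> lam_ge0 h_le_lam xy.
have -> : expR (lam * x) = expR (- lam * (y - x)) * expR (lam * y).
  by rewrite -expRD; congr expR; ring.
rewrite mulrA ler_wpM2r ?expR_ge0 //; apply: gronwall => // [a b xa ab _|].
  rewrite mulNr; apply: survival_step_hazard_le => // t a_lt_t _.
  exact: h_le_lam (le_lt_trans xa a_lt_t).
exact: ltW.
Qed.

End density.

Section eventually_monotone.
Variable R : realType.

Lemma nondecreasing_tail_cmp (phi : R -> R) (z0 l : R) :
  (forall x y, z0 < x -> x <= y -> phi x <= phi y) ->
  exists2 z1, z0 <= z1 &
    (forall t, z1 < t -> l <= phi t) \/ (forall t, z1 < t -> phi t <= l).
Proof.
move=> phi_nd.
have [[z1 [z0_lt_z1 l_le_phi]]|no_crossing] :=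
  pselect (exists z1, z0 < z1 /\ l <= phi z1).
  exists z1; first exact: ltW.
  by left=> t z1_lt_t; apply: (le_trans l_le_phi); apply: phi_nd => //; exact: ltW.
exists z0 => //; right=> t z0_lt_t; rewrite leNgt; apply/negP => phi_gt_l.
by apply: no_crossing; exists t; split=> //; exact: ltW.
Qed.

Lemma eventually_monotone_cmp (phi : R -> R) (l : R) : eventually_monotone phi ->
  exists2 z, 0 <= z &
    (forall t, z < t -> l <= phi t) \/ (forall t, z < t -> phi t <= l).
Proof.
case=> z0 [z0_ge0 [phi_nd|phi_ni]].
  have [z1 z0_le_z1 cmp] := nondecreasing_tail_cmp l phi_nd.
  by exists z1 => //; exact: le_trans z0_le_z1.
have [|z1 z0_le_z1 cmp] := @nondecreasing_tail_cmp (fun t => - phi t) z0 (- l).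
  by move=> x y z0x xy; rewrite lerN2; exact: phi_ni.
exists z1; first exact: le_trans z0_le_z1.
by case: cmp => cmp; [right | left] => t /cmp; rewrite lerN2.
Qed.

End eventually_monotone.

Theorem lemma6 (R : realType) (f : R -> R)
  (* f is a probability density on R *)
  (f_meas : measurable_fun setT f)
  (f_ge0 : forall x, 0 <= f x)
  (f_int1 : (\int[lebesgue_measure]_x (f x)%:E = 1)%E)
  (* (a) bounded density *)
  (f_bdd : exists M : R, forall x, f x <= M)
  (* (b) finite expectation *)
  (f_mean : lebesgue_measure.-integrable setT (fun x => (x * f x)%:E))
  (* (c) support unbounded towards +oo *)
  (f_unbdd : forall z : R, 0 < survival f z)
  (* (d) hazard rate eventually monotone *)
  (f_haz : eventually_monotone (hazard f)) :
  forall lam : R, 0 < lam ->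
    eventually_monotone (fun z => survival f z * expR (lam * z)).
Proof.
move=> lam /ltW lam_ge0.
have [z z_ge0 [lam_le_h|h_le_lam]] := eventually_monotone_cmp lam f_haz.
- exists z; split=> //; right=> x y z_lt_x xy.
  apply: survival_expR_nonincreasing => // t x_lt_t.
  exact: lam_le_h (lt_trans z_lt_x x_lt_t).
- exists z; split=> //; left=> x y z_lt_x xy.
  apply: survival_expR_nondecreasing => // t x_lt_t.
  exact: h_le_lam (lt_trans z_lt_x x_lt_t).
Qed.
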